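(* For integers $m\ge1$ and $k\ge1$, $$\sum_{i=0}^{k}\mu(P|_m,i,J^{*})\binom{m-2i}{2k-2i}\equiv\mu(P|_m,k,L)\pmod 2.$$
   Context: Let $N=\{0,1,2,\ldots\}$, $J^{*}=\{(2n+1)2^{2k}-1 : n,k\in N,\ k>0\}$, $L=N\setminus J^{*}$, and $P=\{k\in N: k\equiv0,3\pmod 4\}$. For an infinite set $A\subseteq N$, $A|_m$ denotes the set of the $m$ smallest elements of $A$. An involution on a finite set $A$ is a permutation $\sigma$ of $A$ with $\sigma=\sigma^{-1}$; its cycles are fixed points and transpositions $(c,d)$. A transposition $(c,d)$ is said to be in a set $B$ if $c+d\in B$. For a finite set $A\subseteq N$, an integer $k\ge0$ and a set $B\subseteq N$, $\mu(A,k,B)$ denotes the number of involutions of $A$ having exactly $k$ transpositions, all of which are in $B$. Binomial coefficients $\binom{a}{b}$ with $b>a$ or $b<0$ are $0$. *)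

From mathcomp Require Import all_boot all_fingroup.
Set Implicit Arguments. Unset Strict Implicit. Unset Printing Implicit Defensive.

(* J^* = {(2n+1) 2^(2k) - 1 : n, k in N, k > 0}.  If x is in J^*, then
   n <= x and k <= x, so the bounded existentials are exact. *)
Definition Jstar (x : nat) : bool :=
  [exists n : 'I_x.+2, exists k : 'I_x.+2,
     (0 < k) && (x.+1 == (2 * n + 1) * 2 ^ (2 * k))].

Definition Lset (x : nat) : bool := ~~ Jstar x.

Definition Pset (x : nat) : bool := (x %% 4 == 0) || (x %% 4 == 3).

(* The m smallest elements of A among {0,...,N-1} (equal to A|_m as soon as
   A has at least m elements below N). *)
Definition restr (A : pred nat) (N m : nat) : seq nat :=
  take m [seq x <- iota 0 N | A x].

(* P|_m : the m smallest elements of P; they are all < 4m (indeed < 2m+2). *)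
Definition Prestr (m : nat) : seq nat := restr Pset (4 * m) m.

(* mu(A,k,B): number of involutions sigma of the finite set A (a duplicate-free
   seq, viewed as the finite type of its elements) having exactly k
   transpositions (each transposition (c,d) is counted once, via c < d),
   all of which are in B (i.e. c + d \in B). *)
Definition mu (A : seq nat) (k : nat) (B : pred nat) : nat :=
  #|[set s : {perm seq_sub A} |
      [&& (s * s == 1)%g,
          #|[set x : seq_sub A | val x < val (s x)]| == k &
          [forall x : seq_sub A, (s x != x) ==> B (val x + val (s x))]]]|.

(* binomial with the paper's convention: C(a,b) = 0 when b > a or b < 0,
   here for a = m - 2i (possibly negative as an integer). *)
Definition binomZ (m i b : nat) : nat := if 2 * i <= m then 'C(m - 2 * i, b) else 0.

From mathcomp Require Import all_boot all_fingroup all_algebra zify.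
Set Implicit Arguments. Unset Strict Implicit. Unset Printing Implicit Defensive.

(* Let X(D,k,R) count the involutions of a finite set D with k transpositions,
   all in the symmetric relation R, and S(D,k) := sum_i X(D,i,R) C(|D|-2i, 2k-2i).
   Classifying the involutions by the image of some a in D gives
   X(D,k+1,R) = X(D-a,k+1,R) + sum_{b in D-a, R a b} X(D-a-b,k,R).
   Mod 2, Pascal's rule C(r+1,2j+2) = C(r,2j+2) + r C(r-1,2j) and the double
   count sum_{b in E} X(E-b,i,R) = (|E|-2i) X(E,i,R) show that S obeys the same
   recursion as X(_,_,not R), with the b such that R a b cancelling in pairs;
   both are 1 for k = 0, so X(D,k,not R) = S(D,k) mod 2.  The theorem is the
   case D = P|_m, R x y = (x+y in J^* ), whose complement is L. *)

Lemma sum_bool_card (I : finType) (A : {set I}) (P : pred I) :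
  \sum_(i in A) (P i : nat) = #|[set i in A | P i]|.
Proof.
rewrite -sum1_card [LHS]big_mkcond [RHS]big_mkcond /=; apply: eq_bigr => i _.
by rewrite !inE; case: (i \in A); case: (P i).
Qed.

Section Involutions.
Variables (T : finType) (v : T -> nat).
Hypothesis v_inj : injective v.
Implicit Types (D E : {set T}) (R : rel T) (s : {perm T}).

Definition involution (s : {perm T}) := (s * s == 1)%g.
Definition supported (D : {set T}) (s : {perm T}) :=
  [forall x, (x \notin D) ==> (s x == x)].
(* [v] orients each transposition (x, s x), so that it is counted once. *)
Definition ntransp (s : {perm T}) := #|[set x | v x < v (s x)]|.
Definition transp_in (R : rel T) (s : {perm T}) :=
  [forall x, (s x != x) ==> R x (s x)].
Definition involutions (D : {set T}) (k : nat) (R : rel T) :=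
  [set s : {perm T} | [&& involution s, supported D s, ntransp s == k & transp_in R s]].
Definition ninvol (D : {set T}) (k : nat) (R : rel T) := #|involutions D k R|.

Lemma involutionK s : involution s -> involutive s.
Proof. by move/eqP=> ss x; rewrite -permM ss perm1. Qed.

Lemma card_moved s : involution s -> #|[set x | s x != x]| = 2 * ntransp s.
Proof.
move=> /involutionK sK; rewrite /ntransp; set U := [set x | v x < v (s x)].
have -> : [set x | s x != x] = U :|: [set s x | x in U].
  apply/setP=> x; rewrite /U !inE; apply/idP/idP.
  - move=> sx_x; have vx : v x != v (s x) by apply: contraNneq sx_x => /v_inj <-.
    case: (ltngtP (v x) (v (s x))) vx => // lt_sx _.
    by apply/imsetP; exists (s x); rewrite ?inE sK.
  - case/orP=> [|/imsetP[y]]; first by apply: contraTneq => ->; rewrite ltnn.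
    by rewrite inE => lt_y ->; rewrite sK; apply: contraTneq lt_y => <-; rewrite ltnn.
rewrite cardsU card_imset; last exact: perm_inj.
have -> : U :&: [set s x | x in U] = set0.
  apply/setP=> x; rewrite !inE; apply/negbTE/andP=> [[lt_x /imsetP[y]]].
  by rewrite inE => lt_y def_x; move: lt_x; rewrite def_x sK => /(ltn_trans lt_y); rewrite ltnn.
by rewrite cards0 subn0 addnn mul2n.
Qed.

Lemma moved_subset D s : supported D s -> [set x | s x != x] \subset D.
Proof.
move/forallP=> sD; apply/subsetP => x; rewrite inE; apply: contraR => xD.
exact: (implyP (sD x)).
Qed.

Lemma ninvol0 D R : ninvol D 0 R = 1.
Proof.
rewrite /ninvol (_ : involutions D 0 R = [set 1%g]) ?cards1 //.
apply/setP => s; rewrite !inE; apply/idP/eqP => [|->].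
- case/and4P => inv_s _ /eqP n0 _; move: (card_moved inv_s); rewrite n0 muln0.
  move/eqP; rewrite cards_eq0 => /eqP moved0; apply/permP => x; rewrite perm1.
  by apply/eqP/negPn/negP => sx_x; have := in_set0 x; rewrite -moved0 inE sx_x.
- apply/and4P; split; rewrite /involution ?mulg1 //.
  + by apply/forallP => x; rewrite perm1 eqxx implybT.
  + by rewrite /ntransp (_ : [set x | _] = set0) ?cards0 //; apply/setP => x; rewrite !inE perm1 ltnn.
  + by apply/forallP => x; rewrite perm1 eqxx.
Qed.

Lemma ninvol_eq0 D k R : #|D| < 2 * k -> ninvol D k R = 0.
Proof.
move=> small_D; apply/eqP; rewrite cards_eq0; apply/eqP/setP => s; rewrite !inE.
apply/negbTE/and4P => [[inv_s sD /eqP nk _]].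
have := subset_leq_card (moved_subset sD).
by rewrite card_moved // nk leqNgt small_D.
Qed.

Lemma supported_setD1 D b s : supported (D :\ b) s = supported D s && (s b == b).
Proof.
apply/forallP/andP => [sD|[/forallP sD sb] x].
- split; last by apply: (implyP (sD b)); rewrite !inE eqxx.
  apply/forallP => x; apply/implyP => xD; apply: (implyP (sD x)).
  by rewrite !inE negb_and xD orbT.
- apply/implyP; rewrite !inE negb_and negbK; case/orP => [/eqP -> // | xD].
  exact: (implyP (sD x)).
Qed.

Lemma ninvol_setD1 D b k R :
  ninvol (D :\ b) k R = \sum_(s in involutions D k R) (s b == b).
Proof.
rewrite sum_bool_card; apply: eq_card => s; rewrite !inE supported_setD1.
by case: (involution s); case: (supported D s); case: (s b == b); case: (_ == k); case: (transp_in R s).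
Qed.

(* Each involution of E with i transpositions fixes |E| - 2i points of E. *)
Lemma sum_ninvol_setD1 E i R :
  \sum_(b in E) ninvol (E :\ b) i R = (#|E| - 2 * i) * ninvol E i R.
Proof.
under eq_bigr do rewrite ninvol_setD1.
rewrite exchange_big /= /ninvol mulnC -sum_nat_const; apply: eq_bigr => s.
rewrite inE => /and4P[inv_s sE /eqP <- _].
rewrite -(card_moved inv_s) -(cardsID [set x | s x != x] E).
rewrite (setIidPr (moved_subset sE)) addKn sum_bool_card.
by apply: eq_card => b; rewrite !inE negbK andbC.
Qed.

Section RemoveTransposition.
Variables (a b : T) (s : {perm T}).
Hypotheses (neq_ab : a != b) (sa : s a = b) (sb : s b = a).
Let t := (tperm a b * s)%g.

Lemma swap_fixl : t a = a. Proof. by rewrite /t permM tpermL sb. Qed.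
Lemma swap_fixr : t b = b. Proof. by rewrite /t permM tpermR sa. Qed.
Lemma swap_id x : x != a -> x != b -> t x = s x.
Proof. by move=> xa xb; rewrite /t permM tpermD // eq_sym. Qed.

Lemma commute_tperm : commute s (tperm a b).
Proof.
apply/permP => x; rewrite !permM.
have [->|xa] := eqVneq x a; first by rewrite sa tpermL tpermR.
have [->|xb] := eqVneq x b; first by rewrite sb tpermL tpermR.
have sxa : s x != a by apply: contra xb => /eqP; rewrite -sb => /perm_inj ->.
have sxb : s x != b by apply: contra xa => /eqP; rewrite -sa => /perm_inj ->.
by rewrite !tpermD // eq_sym.
Qed.

Lemma involution_swap : involution t = involution s.
Proof.
by rewrite /involution /t -mulgA (mulgA s) commute_tperm !mulgA tperm2 mul1g.
Qed.

Lemma supported_swap D : a \in D -> b \in D -> supported (D :\ a :\ b) t = supported D s.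
Proof.
move=> aD bD; rewrite !supported_setD1 swap_fixl swap_fixr !eqxx !andbT.
apply/forallP/forallP => st x; apply/implyP => xD.
- have xa : x != a by apply: contraNneq xD => ->.
  have xb : x != b by apply: contraNneq xD => ->.
  by rewrite -swap_id //; apply: (implyP (st x)).
- have xa : x != a by apply: contraNneq xD => ->.
  have xb : x != b by apply: contraNneq xD => ->.
  by rewrite swap_id //; apply: (implyP (st x)).
Qed.

Lemma ntransp_swap : ntransp s = (ntransp t).+1.
Proof.
rewrite /ntransp (cardsD1 a) (cardsD1 b ([set x | v x < v (s x)] :\ a)).
have -> : [set x | v x < v (s x)] :\ a :\ b = [set x | v x < v (t x)].
  apply/setP => x; rewrite !inE.
  have [->|xb] := eqVneq x b; first by rewrite swap_fixr ltnn.
  have [->|xa] := eqVneq x a; first by rewrite swap_fixl ltnn.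
  by rewrite swap_id.
rewrite !inE sa sb eq_sym neq_ab /= addnA.
have vab : v a != v b by apply: contra neq_ab => /eqP/v_inj ->.
by case: (ltngtP (v a) (v b)) vab.
Qed.

Lemma transp_in_swap R : symmetric R -> transp_in R s = R a b && transp_in R t.
Proof.
move=> symR; apply/forallP/andP => [sR|[Rab /forallP tR] x].
- split; first by have := implyP (sR a); rewrite sa eq_sym neq_ab => /(_ isT).
  apply/forallP => x; apply/implyP.
  have [->|xa] := eqVneq x a; first by rewrite swap_fixl eqxx.
  have [->|xb] := eqVneq x b; first by rewrite swap_fixr eqxx.
  by rewrite swap_id // => sx_x; apply: (implyP (sR x)).
- apply/implyP.
  have [->|xa] := eqVneq x a; first by rewrite sa.
  have [->|xb] := eqVneq x b; first by rewrite sb symR.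
  by rewrite -swap_id // => tx_x; apply: (implyP (tR x)).
Qed.
End RemoveTransposition.

Lemma involutions_sending D a b k R : symmetric R -> a \in D -> b \in D -> a != b -> R a b ->
  [set s in involutions D k.+1 R | s a == b] =
    [set (tperm a b * t)%g | t in involutions (D :\ a :\ b) k R].
Proof.
move=> symR aD bD neq_ab Rab; apply/setP => s; apply/idP/imsetP.
- rewrite !inE => /andP[/and4P[inv_s sD nk sR] /eqP sa].
  have sb : s b = a by rewrite -sa involutionK.
  exists (tperm a b * s)%g; last by rewrite mulgA tperm2 mul1g.
  rewrite inE involution_swap // supported_swap // inv_s sD /=.
  rewrite (ntransp_swap neq_ab sa sb) eqSS in nk; rewrite nk /=.
  by rewrite (transp_in_swap neq_ab sa sb symR) Rab in sR.
- case=> t /[!inE] /and4P[inv_t tD nk tR] ->.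
  move: (tD); rewrite !supported_setD1 => /andP[/andP[_ /eqP ta] /eqP tb].
  have sa : (tperm a b * t)%g a = b by rewrite permM tpermL tb.
  have sb : (tperm a b * t)%g b = a by rewrite permM tpermR ta.
  have def_t : t = (tperm a b * (tperm a b * t))%g by rewrite mulgA tperm2 mul1g.
  rewrite def_t in inv_t tD nk tR.
  rewrite involution_swap // in inv_t; rewrite supported_swap // in tD.
  rewrite inv_t tD (ntransp_swap neq_ab sa sb) (eqP nk) eqxx sa eqxx /=.
  by rewrite (transp_in_swap neq_ab sa sb symR) Rab tR.
Qed.

Lemma sum_involutions_sending D a b k R : symmetric R -> a \in D -> a != b ->
  \sum_(s in involutions D k.+1 R) (s a == b) =
    if (b \in D) && R a b then ninvol (D :\ a :\ b) k R else 0.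
Proof.
move=> symR aD neq_ab; rewrite sum_bool_card.
case: ifP => [/andP[bD Rab] | not_ab].
  by rewrite involutions_sending // card_imset //; apply: mulgI.
apply/eqP; rewrite cards_eq0; apply/eqP/setP => s; rewrite !inE.
apply/negbTE/andP => [[/and4P[inv_s sD _ sR] /eqP sa]].
move/negbT: not_ab; rewrite negb_and => /orP[bD | notRab].
- have sb : s b = b by apply/eqP; apply: (implyP (forallP sD b)).
  by rewrite -{1}(involutionK inv_s a) sa sb eqxx in neq_ab.
- have := implyP (forallP sR a); rewrite sa eq_sym neq_ab => /(_ isT).
  by rewrite (negbTE notRab).
Qed.

Lemma ninvol_recS D a k R : symmetric R -> a \in D ->
  ninvol D k.+1 R =
    ninvol (D :\ a) k.+1 R + \sum_(b in D :\ a | R a b) ninvol (D :\ a :\ b) k R.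
Proof.
move=> symR aD.
have -> : ninvol D k.+1 R = \sum_(s in involutions D k.+1 R) \sum_b (s a == b).
  rewrite /ninvol -sum1_card; apply: eq_bigr => s _.
  by rewrite (bigD1 (s a)) //= eqxx big1 // => b; rewrite eq_sym => /negbTE ->.
rewrite exchange_big /= (bigD1 a) //= -ninvol_setD1; congr (_ + _).
rewrite [LHS]big_mkcond [RHS]big_mkcond /=; apply: eq_bigr => b _.
rewrite in_setD1; have [->|ba] := eqVneq b a; first by [].
by rewrite sum_involutions_sending // eq_sym.
Qed.
End Involutions.

Import GRing.Theory.
Local Open Scope ring_scope.

Lemma natr_F2 n : (n%:R : 'F_2) = (odd n)%:R.
Proof. by rewrite -(Fp_nat_mod (isT : prime 2)) modn2. Qed.

Lemma binS_even_F2 r j :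
  ('C(r.+1, (2 * j).+2)%:R : 'F_2) = 'C(r, (2 * j).+2)%:R + r%:R * 'C(r.-1, 2 * j)%:R.
Proof.
rewrite binS -natrM mul_bin_diag natrM [((2 * j).+1)%:R]natr_F2 /=.
by rewrite oddM /= mul1r natrD.
Qed.

(* For [n < 2i] all three binomials vanish by truncated subtraction. *)
Lemma binom_pascal_F2 n k i : (i <= k)%N ->
  ('C(n.+1 - 2 * i, 2 * (k.+1 - i))%:R : 'F_2) =
    'C(n - 2 * i, 2 * (k.+1 - i))%:R + (n - 2 * i)%:R * 'C(n.-1 - 2 * i, 2 * (k - i))%:R.
Proof.
move=> le_ik; rewrite (subSn le_ik) mulnS.
have [lt_n|le_n] := ltnP n (2 * i).
  have [-> ->] : (n.+1 - 2 * i = 0 /\ n - 2 * i = 0)%N by lia.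
  by rewrite !bin0n mul0r addr0.
have -> : (n.-1 - 2 * i = (n - 2 * i).-1)%N by lia.
by rewrite (subSn le_n) binS_even_F2.
Qed.

Section ComplementParity.
Variables (T : finType) (v : T -> nat) (R : rel T).
Hypotheses (v_inj : injective v) (symR : symmetric R).
Implicit Types (D E : {set T}).

Definition binom_sum (D : {set T}) (k : nat) : 'F_2 :=
  \sum_(i < k.+1) (ninvol v D i R)%:R * 'C(#|D| - 2 * i, 2 * (k - i))%:R.

Lemma binom_sum0 D : binom_sum D 0 = 1.
Proof. by rewrite /binom_sum big_ord1 ninvol0 // muln0 bin0 mulr1. Qed.

Lemma binom_sum_eq0 D k : (#|D| < 2 * k)%N -> binom_sum D k = 0.
Proof.
move=> small_D; apply: big1 => i _.
have [lt_D|le_D] := ltnP #|D| (2 * i); first by rewrite ninvol_eq0 // mul0r.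
by rewrite bin_small ?mulr0 //; have := ltn_ord i; lia.
Qed.

Lemma binom_sum_shift E k :
  \sum_(i < k.+2) (ninvol v E i R)%:R * 'C(#|E|.+1 - 2 * i, 2 * (k.+1 - i))%:R =
    binom_sum E k.+1 + \sum_(b in E) binom_sum (E :\ b) k.
Proof.
have fixed_count : \sum_(b in E) binom_sum (E :\ b) k =
    \sum_(i < k.+1) (#|E| - 2 * i)%:R * (ninvol v E i R)%:R
                    * 'C(#|E|.-1 - 2 * i, 2 * (k - i))%:R.
  rewrite /binom_sum exchange_big /=; apply: eq_bigr => i _.
  have cardE b : b \in E -> #|E :\ b| = #|E|.-1 by move=> bE; rewrite (cardsD1 b E) bE.
  under eq_bigr => b bE do rewrite cardE //.
  by rewrite -mulr_suml -natr_sum sum_ninvol_setD1 // natrM.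
rewrite fixed_count /binom_sum big_ord_recr [in RHS]big_ord_recr /= !subnn !muln0.
rewrite !bin0 addrAC -big_split; congr (_ + _); apply: eq_bigr => i _.
rewrite binom_pascal_F2 ?mulrDr; last by rewrite -ltnS ltn_ord.
by rewrite mulrA [_ * (ninvol _ _ _ _)%:R]mulrC.
Qed.

Lemma binom_sum_recS D a k : a \in D ->
  binom_sum D k.+1 =
    binom_sum (D :\ a) k.+1 + \sum_(b in D :\ a | ~~ R a b) binom_sum (D :\ a :\ b) k.
Proof.
move=> aD; set D' := D :\ a.
have -> : binom_sum D k.+1 =
    \sum_(i < k.+2) (ninvol v D' i R)%:R * 'C(#|D'|.+1 - 2 * i, 2 * (k.+1 - i))%:R
    + \sum_(b in D' | R a b) binom_sum (D' :\ b) k.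
  rewrite /binom_sum (cardsD1 a D) aD big_ord_recl [X in _ = X + _]big_ord_recl.
  rewrite !ninvol0 // -addrA; congr (_ + _).
  under eq_bigr => i _ do rewrite lift0 (ninvol_recS v_inj _ symR aD) natrD natr_sum mulrDl.
  rewrite big_split /=; congr (_ + _).
  under eq_bigr do rewrite mulr_suml.
  rewrite [LHS]exchange_big /=; apply: eq_bigr => b /andP[bD' _].
  by apply: eq_bigr => i _; rewrite (cardsD1 b D') bD'; congr (_ * 'C(_, _)%:R); lia.
rewrite binom_sum_shift [\sum_(b in D') _](bigID (R a)) /= -!addrA; congr (_ + _).
by rewrite addrC -addrA (addrr_pchar2 (pchar_Fp (isT : prime 2))) addr0.
Qed.

Theorem ninvol_compl_F2 D k : (ninvol v D k (fun x y => ~~ R x y))%:R = binom_sum D k.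
Proof.
have symNR : symmetric (fun x y => ~~ R x y) by move=> x y; rewrite symR.
have [n] := ubnP #|D|; elim: n => // n IHn in D k *; rewrite ltnS => le_Dn.
case: k => [|k]; first by rewrite ninvol0 // binom_sum0.
have [D0|[a aD]] := set_0Vmem D.
  by rewrite ninvol_eq0 ?binom_sum_eq0 // D0 cards0.
have lt_D' : (#|D :\ a| < #|D|)%N by rewrite (cardsD1 a D) aD.
rewrite (ninvol_recS v_inj _ symNR aD) natrD natr_sum (binom_sum_recS _ aD).
rewrite IHn; last exact: leq_trans lt_D' le_Dn.
congr (_ + _); apply: eq_bigr => b /andP[bD' _]; apply: IHn.
by rewrite (cardsD1 b (D :\ a)) bD' in lt_D'; apply: leq_trans le_Dn; lia.
Qed.
End ComplementParity.

Local Close Scope ring_scope.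

Lemma mu_ninvol (A : seq nat) k (B : pred nat) :
  mu A k B = ninvol val [set: seq_sub A] k (fun x y => B (val x + val y)).
Proof.
apply: eq_card => s; rewrite !inE.
by have -> : supported [set: seq_sub A] s by apply/forallP => x; rewrite in_setT.
Qed.

Lemma card_Prestr m : #|{: seq_sub (Prestr m)}| = m.
Proof.
rewrite card_seq_sub; last by rewrite take_uniq // filter_uniq // iota_uniq.
rewrite size_take size_filter; case: ltnP => // le_count; apply/eqP.
rewrite eqn_leq le_count /= {le_count}; elim: m => // m IHm.
by rewrite mulnS addnC iotaD count_cat add0n -[m.+1]addn1 leq_add //= /Pset modnMr.
Qed.

Theorem lemma2p4 (m k : nat) : 1 <= m -> 1 <= k ->
  \sum_(0 <= i < k.+1) mu (Prestr m) i Jstar * binomZ m i (2 * k - 2 * i)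
  = mu (Prestr m) k Lset %[mod 2].
Proof.
move=> _ _; set R := fun x y : seq_sub (Prestr m) => Jstar (val x + val y).
have symR : symmetric R by move=> x y; rewrite /R addnC.
rewrite -!(val_Fp_nat (isT : prime 2)); congr val.
rewrite mu_ninvol (ninvol_compl_F2 val_inj symR) natr_sum big_mkord.
apply: eq_bigr => i _; rewrite mu_ninvol natrM cardsT card_Prestr /binomZ mulnBr.
case: leqP => // lt_m.
by rewrite (@ninvol_eq0 _ _ val_inj) ?cardsT ?card_Prestr // !mul0r.
Qed.
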